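(* Let $G$ be a connected graph and let $e=uv\in E(G)$ be an edge with $\min\{\deg_G(u),\deg_G(v)\}\geq 2$. Let $G'$ be the graph obtained from $G$ by applying Operation 1 to $e$, i.e. deleting the edge $uv$ and adding two new vertices $u_e,v_e$ together with the edges $uu_e$ and $vv_e$ (so $\deg_{G'}(u_e)=\deg_{G'}(v_e)=1$). Then $rc(L(G))\leq rc(L(G'))$.
   Context: All graphs are simple, finite and undirected. $L(H)$ denotes the line graph of $H$: its vertex set is $E(H)$, two vertices being adjacent iff the corresponding edges share an end. For an edge-colouring of a graph (adjacent edges may receive the same colour), a path is rainbow if no two of its edges have the same colour; the graph is rainbow connected if every two vertices are joined by a rainbow path. The rainbow connection number $rc(H)$ of a connected graph $H$ is the smallest number of colours in an edge-colouring making $H$ rainbow connected (if $H$ is disconnected, $rc(H)$ is taken to be $\infty$). *)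

From mathcomp Require Import all_boot.
From mathcomp Require Import boolp.

Set Implicit Arguments.
Unset Strict Implicit.
Unset Printing Implicit Defensive.

Definition simple_graph (T : finType) (g : rel T) : Prop :=
  symmetric g /\ irreflexive g.

Definition connected_graph (T : finType) (g : rel T) : Prop :=
  forall x y : T, connect g x y.

Definition deg (T : finType) (g : rel T) (x : T) : nat := #|[set y | g x y]|.

Definition is_edge (T : finType) (g : rel T) (A : {set T}) : bool :=
  [exists x, exists y, g x y && (A == [set x; y])].

Definition line_vertex (T : finType) (g : rel T) := {A : {set T} | is_edge g A}.

Definition line_graph (T : finType) (g : rel T) : rel (line_vertex g) :=
  fun A B => (A != B) && (val A :&: val B != set0).
Arguments line_graph {T} g.

(* Rainbow connection. A colouring with k colours assigns a colour to each
   unordered pair {a, b} (only pairs that are edges matter). *)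
Definition rainbow_path (V : finType) (h : rel V) (k : nat)
    (c : {set V} -> 'I_k) (x : V) (p : seq V) : bool :=
  [&& path h x p, uniq (x :: p) & uniq (pairmap (fun a b => c [set a; b]) x p)].

Definition rainbow_connected (V : finType) (h : rel V) (k : nat)
    (c : {set V} -> 'I_k) : Prop :=
  forall x y : V, exists p : seq V, rainbow_path h c x p /\ last x p = y.

Definition rc_colourable (V : finType) (h : rel V) (k : nat) : Prop :=
  exists c : {set V} -> 'I_k, rainbow_connected h c.

Lemma rc_ex_bool (V : finType) (h : rel V) :
  (exists k, rc_colourable h k) -> exists k, `[< rc_colourable h k >].
Proof. by case=> k Hk; exists k; apply/asboolP. Qed.

(* rc H : None encodes infinity (no colouring works, e.g. H disconnected),
   Some k is the least number of colours making H rainbow connected. *)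
Definition rc (V : finType) (h : rel V) : option nat :=
  match pselect (exists k, rc_colourable h k) with
  | left P => Some (ex_minn (rc_ex_bool P))
  | right _ => None
  end.

Definition ext_le (a b : option nat) : bool :=
  match a, b with
  | _, None => true
  | Some m, Some n => m <= n
  | None, Some _ => false
  end.

(* Operation 1 on edge uv: delete uv, add new vertices u_e := inr false and
   v_e := inr true with edges u u_e and v v_e. Vertex type T + bool. *)
Definition operation1 (T : finType) (g : rel T) (u v : T) : rel (T + bool) :=
  fun a b =>
    match a, b with
    | inl x, inl y => g x y && ~~ (((x == u) && (y == v)) || ((x == v) && (y == u)))
    | inl x, inr false => x == u
    | inr false, inl x => x == u
    | inl x, inr true => x == v
    | inr true, inl x => x == v
    | inr _, inr _ => false
    end.

From mathcomp Require Import all_boot boolp.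

Set Implicit Arguments.
Unset Strict Implicit.
Unset Printing Implicit Defensive.

(* Contracting the pendant edges u u_e and v v_e of G' back onto uv is a
   surjective homomorphism L(G') -> L(G), and every edge XY of L(G) has exactly
   one edge of L(G') above it: an edge X <> uv has a unique preimage, while uv
   lifts to u u_e or to v v_e according to whether Y meets uv in u or in v.
   Colouring each edge of L(G) like the edge above it, a rainbow path of L(G')
   maps to a walk of L(G) with the same colour sequence, and cutting out its
   loops leaves a rainbow path. *)

Section ShortenWalk.
Variables (V X : eqType) (e : rel V) (f : V -> V -> X).

Lemma shorten_uniq_pairmap x p : path e x p -> uniq (pairmap f x p) ->
  exists q, [/\ path e x q, uniq (x :: q), uniq (pairmap f x q),
    {subset pairmap f x q <= pairmap f x p} & last x q = last x p].
Proof.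
elim: p x => [|y p IHp] x /=; first by exists [::].
case/andP=> exy ep /andP[fxy_p up].
have [q [eq uq ufq sub lq]] := IHp y ep up.
have sub' : {subset pairmap f y q <= f x y :: pairmap f y p}.
  by move=> w /sub; rewrite inE => ->; rewrite orbT.
have [Eyx|nyx] := eqVneq y x; first by subst x; exists q; split.
have [xq|nxq] := boolP (x \in q); last first.
  exists (y :: q); split=> //=; first by rewrite exy.
  - by rewrite inE negb_or eq_sym nyx nxq.
  - by rewrite ufq andbT; apply: contra fxy_p => /sub.
  - by move=> w; rewrite inE => /orP[/eqP->|/sub' //]; rewrite inE eqxx.
case/splitPr: xq eq uq ufq sub' lq => s1 s2.
rewrite cat_path last_cat (pairmap_cat f) /= => /and3P[_ _ es2].
move=> /andP[_]; rewrite cat_uniq => /and3P[_ _ us2].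
rewrite cat_uniq => /and3P[_ _ /andP[_ ufs2]] sub' <-.
exists s2; split=> // w w_s2; apply: sub'.
by rewrite mem_cat inE w_s2 !orbT.
Qed.

End ShortenWalk.

Lemma rainbow_walk_path (V : finType) (h : rel V) k (c : {set V} -> 'I_k) x p :
    path h x p -> uniq (pairmap (fun a b => c [set a; b]) x p) ->
  exists q, rainbow_path h c x q /\ last x q = last x p.
Proof.
move=> hp up; have [q [hq uq ucq _ lq]] := shorten_uniq_pairmap hp up.
by exists q; rewrite /rainbow_path hq uq ucq.
Qed.

Lemma eq_set2 (T : finType) (x y a b : T) : x != y ->
  ([set x; y] == [set a; b]) = (x == a) && (y == b) || (x == b) && (y == a).
Proof.
move=> nxy; apply/eqP/idP => [Exy|]; last first.
  by case/orP=> /andP[/eqP-> /eqP->] //; rewrite setUC.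
have: x \in [set a; b] by rewrite -Exy set21.
have: y \in [set a; b] by rewrite -Exy set22.
move: nxy; rewrite !inE => + /orP[]/eqP Ey /orP[]/eqP Ex.
all: by rewrite Ex Ey ?eqxx ?orbT.
Qed.

Section LineGraph.
Variables (T : finType) (r : rel T).

Lemma line_graph_sym : symmetric (line_graph r).
Proof. by move=> A B; rewrite /line_graph eq_sym setIC. Qed.

Lemma line_graph_irr : irreflexive (line_graph r).
Proof. by move=> A; rewrite /line_graph eqxx. Qed.

Lemma is_edge_set2 x y : r x y -> is_edge r [set x; y].
Proof.
by move=> rxy; apply/existsP; exists x; apply/existsP; exists y; rewrite rxy eqxx.
Qed.

Lemma is_edge_eq_set2 A x y : is_edge r A -> x != y -> x \in A -> y \in A ->
  A = [set x; y].
Proof.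
case/existsP=> a /existsP[b /andP[_ /eqP->]] nxy xA yA; apply/esym/eqP.
by rewrite eqEcard subUset !sub1set xA yA !cards2 nxy ltnS leq_b1.
Qed.

Hypothesis r_irr : irreflexive r.

Lemma is_edge_set1 x : ~~ is_edge r [set x].
Proof.
apply/negP => /existsP[y /existsP[z /andP[ryz /eqP E]]].
have /set1P Ey : y \in [set x] by rewrite E set21.
have /set1P Ez : z \in [set x] by rewrite E set22.
by move: ryz; rewrite Ey Ez r_irr.
Qed.

End LineGraph.

Section RainbowPullback.
Variables (V V' : finType) (h : rel V) (h' : rel V').
Variables (phi : V' -> V) (lift : V -> V -> V').
Hypotheses (h_irr : irreflexive h) (h'_sym : symmetric h').
Hypothesis phi_homo : {homo phi : a b / h' a b >-> h a b}.
Hypothesis phi_surj : forall x, exists a, phi a = x.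
Hypothesis liftK : forall a b, h' a b -> lift (phi a) (phi b) = a.

Definition pullback_colouring k (c' : {set V'} -> 'I_k) (S : {set V}) : 'I_k :=
  c' [set lift x y | x in S, y in S & x != y].

Lemma pullback_colouring_edge k (c' : {set V'} -> 'I_k) a b : h' a b ->
  pullback_colouring c' [set phi a; phi b] = c' [set a; b].
Proof.
move=> hab; congr c'; have hba : h' b a by rewrite h'_sym.
have nab : phi a != phi b by apply: contraTneq (phi_homo hab) => ->; rewrite h_irr.
have nba : phi b != phi a by rewrite eq_sym.
apply/setP=> w; apply/imset2P/set2P => [[x y xS] | [->|->]].
- rewrite inE => /andP[yS nxy] ->.
  case/set2P: xS nxy => ->; case/set2P: yS => ->; rewrite ?eqxx // => _.
  + by left; rewrite liftK.
  + by right; rewrite liftK.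
- by exists (phi a) (phi b); rewrite ?inE ?eqxx ?nab ?liftK ?orbT.
- by exists (phi b) (phi a); rewrite ?inE ?eqxx ?nba ?liftK ?orbT.
Qed.

Lemma pairmap_pullback k (c' : {set V'} -> 'I_k) a p : path h' a p ->
  pairmap (fun x y => pullback_colouring c' [set x; y]) (phi a) (map phi p) =
  pairmap (fun x y => c' [set x; y]) a p.
Proof.
by elim: p a => //= b p IHp a /andP[hab hp]; rewrite pullback_colouring_edge // IHp.
Qed.

Lemma rainbow_connected_pullback k (c' : {set V'} -> 'I_k) :
  rainbow_connected h' c' -> rainbow_connected h (pullback_colouring c').
Proof.
move=> rc' x y; have [a <-] := phi_surj x; have [b <-] := phi_surj y.
have [p [/and3P[hp _ up] <-]] := rc' a b.
rewrite -last_map; apply: rainbow_walk_path; first exact: homo_path hp.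
by rewrite pairmap_pullback.
Qed.

Lemma rc_colourable_pullback k : rc_colourable h' k -> rc_colourable h k.
Proof.
by case=> c' rc'; exists (pullback_colouring c'); apply: rainbow_connected_pullback.
Qed.

End RainbowPullback.

Lemma ext_le_rc (V V' : finType) (h : rel V) (h' : rel V') :
  (forall k, rc_colourable h' k -> rc_colourable h k) -> ext_le (rc h) (rc h').
Proof.
move=> col_h; rewrite /rc.
case: (pselect (exists k, rc_colourable h' k)) => [P'|_];
  last by case: (pselect (exists k, rc_colourable h k)).
case: (ex_minnP (rc_ex_bool P')) => m /asboolP col_m _.
case: (pselect (exists k, rc_colourable h k)) => [P|[]]; last by exists m; apply: col_h.
by case: (ex_minnP (rc_ex_bool P)) => n _ min_n; apply/min_n/asboolP/col_h.
Qed.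

Section ContractPendantEdges.
Variables (T : finType) (g : rel T) (u v : T).
Hypotheses (g_irr : irreflexive g) (guv : g u v).
Local Notation g' := (operation1 g u v).

Let u_neq_v : u != v.
Proof. by apply: contraTneq guv => ->; rewrite g_irr. Qed.

Definition uv_edge : line_vertex g := exist _ [set u; v] (is_edge_set2 guv).

Definition pendant_u : line_vertex g' :=
  exist _ [set inl u; inr false] (@is_edge_set2 _ g' (inl u) (inr false) (eqxx u)).

Definition pendant_v : line_vertex g' :=
  exist _ [set inl v; inr true] (@is_edge_set2 _ g' (inl v) (inr true) (eqxx v)).

(* The preimage under [inl] of a pendant edge is a singleton, hence not an
   edge, so both pendant edges are sent to the default [uv_edge]. *)
Definition contract (A : line_vertex g') : line_vertex g :=
  insubd uv_edge (inl @^-1: val A).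

Definition expand (X : line_vertex g) : line_vertex g' := insubd pendant_u (inl @: val X).

Definition lift_edge (X Y : line_vertex g) : line_vertex g' :=
  if X == uv_edge then (if u \in val Y then pendant_u else pendant_v) else expand X.

Lemma expand_val (X : line_vertex g) : X != uv_edge -> val (expand X) = inl @: val X.
Proof.
case: X => A /[dup] /existsP[x /existsP[y /andP[gxy /eqP EA]]] A_edge neX.
rewrite val_insubd /= EA imsetU1 imset_set1 is_edge_set2 //= gxy /=.
apply: contra neX => /orP[] /andP[/eqP Ex /eqP Ey]; apply/eqP/val_inj => /=;
  by rewrite EA Ex Ey // setUC.
Qed.

Lemma expandK (X : line_vertex g) : X != uv_edge -> contract (expand X) = X.
Proof.
move=> neX; apply: val_inj; rewrite val_insubd expand_val //.
have -> : inl @^-1: (@inl T bool @: val X) = val X.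
  by apply/setP => z; rewrite inE mem_imset //; apply: inl_inj.
by rewrite (valP X).
Qed.

Lemma contract_pendant_u : contract pendant_u = uv_edge.
Proof.
apply: val_inj; rewrite val_insubd.
have -> : inl @^-1: [set inl u; inr false] = [set u] :> {set T}.
  by apply/setP => z; rewrite !inE orbF.
by rewrite (negbTE (is_edge_set1 g_irr u)).
Qed.

Lemma contract_pendant_v : contract pendant_v = uv_edge.
Proof.
apply: val_inj; rewrite val_insubd.
have -> : inl @^-1: [set inl v; inr true] = [set v] :> {set T}.
  by apply/setP => z; rewrite !inE orbF.
by rewrite (negbTE (is_edge_set1 g_irr v)).
Qed.

Lemma line_vertex'_cases (A : line_vertex g') :
  [\/ A = pendant_u, A = pendant_v | exists2 X, X != uv_edge & A = expand X].
Proof.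
case: A => A /[dup] /existsP[x /existsP[y /andP[gxy /eqP EA]]] A_edge.
have val_eq B : val B = A -> exist _ A A_edge = B by move=> EB; apply: val_inj.
case: x y gxy EA => [x|[]] [y|[]] //= gxy EA.
- case/andP: gxy => gxy nuv.
  have X_neq : exist _ [set x; y] (is_edge_set2 gxy) != uv_edge.
    apply: contra nuv => /eqP[] /eqP; rewrite eq_set2 //.
    by apply: contraTneq gxy => ->; rewrite g_irr.
  apply: Or33; exists (exist _ [set x; y] (is_edge_set2 gxy)) => //.
  by apply: val_eq; rewrite expand_val //= EA imsetU1 imset_set1.
- by apply: Or32; apply: val_eq; rewrite EA (eqP gxy).
- by apply: Or31; apply: val_eq; rewrite EA (eqP gxy).
- by apply: Or32; apply: val_eq; rewrite EA (eqP gxy) setUC.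
- by apply: Or31; apply: val_eq; rewrite EA (eqP gxy) setUC.
Qed.

Lemma mem_contract (A : line_vertex g') (z : T) :
  inl z \in val A -> z \in val (contract A).
Proof.
case: (line_vertex'_cases A) => [->|->|[X neX ->]].
- by rewrite contract_pendant_u !inE orbF => /eqP[->]; rewrite eqxx.
- by rewrite contract_pendant_v !inE orbF => /eqP[->]; rewrite eqxx orbT.
- by rewrite expand_val // mem_imset ?expandK //; apply: inl_inj.
Qed.

Lemma mem_inr_pendant (A : line_vertex g') (b : bool) :
  inr b \in val A -> A = if b then pendant_v else pendant_u.
Proof.
case: (line_vertex'_cases A) => [->|->|[X neX ->]]; try by case: b; rewrite !inE.
by rewrite expand_val // => /imsetP[].
Qed.

Lemma line_graph'_common_inl (A B : line_vertex g') : line_graph g' A B ->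
  exists2 z, inl z \in val A & inl z \in val B.
Proof.
case/andP=> nAB /set0Pn[[z|b]]; rewrite inE => /andP[zA zB]; first by exists z.
by move: nAB; rewrite (mem_inr_pendant zA) (mem_inr_pendant zB) eqxx.
Qed.

Lemma lift_edge_contract (A B : line_vertex g') : line_graph g' A B ->
  lift_edge (contract A) (contract B) = A.
Proof.
move=> AB; have [z zA zB] := line_graph'_common_inl AB.
rewrite /lift_edge; case: (line_vertex'_cases A) AB zA => [->|->|[X neX ->]] AB.
- rewrite contract_pendant_u eqxx !inE orbF => /eqP[Ez].
  by move: zB; rewrite Ez => /mem_contract ->.
- rewrite contract_pendant_v eqxx !inE orbF => /eqP[Ez]; subst z.
  case: (line_vertex'_cases B) AB zB => [->|->|[Y neY ->]] AB.
  + rewrite !inE orbF => /eqP[Evu]; exfalso.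
    by move: u_neq_v; rewrite Evu eqxx.
  + by rewrite line_graph_irr in AB.
  rewrite expand_val // mem_imset ?expandK //; last exact: inl_inj.
  move=> vY; case: ifP => // uY.
  by case/eqP: neY; apply: val_inj; apply: is_edge_eq_set2 (valP Y) u_neq_v uY vY.
- by rewrite expandK // (negbTE neX).
Qed.

Lemma contract_homo : {homo contract : A B / line_graph g' A B >-> line_graph g A B}.
Proof.
move=> A B AB; have [z zA zB] := line_graph'_common_inl AB.
apply/andP; split; last by apply/set0Pn; exists z; rewrite inE !mem_contract.
have BA : line_graph g' B A by rewrite line_graph_sym.
apply/eqP => E; have A_eq_B : A = B.
  by rewrite -(lift_edge_contract AB) -[RHS](lift_edge_contract BA) E.
by move: AB; rewrite A_eq_B line_graph_irr.
Qed.

Lemma contract_surj (X : line_vertex g) : exists A, contract A = X.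
Proof.
have [->|neX] := eqVneq X uv_edge; first by exists pendant_u; apply: contract_pendant_u.
by exists (expand X); apply: expandK.
Qed.

Lemma rc_colourable_operation1 k :
  rc_colourable (line_graph g') k -> rc_colourable (line_graph g) k.
Proof.
apply: (rc_colourable_pullback (@line_graph_irr _ g) (@line_graph_sym _ g')
  contract_homo contract_surj lift_edge_contract).
Qed.

End ContractPendantEdges.

Theorem mainTheorem1 (T : finType) (g : rel T) (u v : T) :
  simple_graph g -> connected_graph g -> g u v ->
  2 <= minn (deg g u) (deg g v) ->
  ext_le (rc (line_graph g)) (rc (line_graph (operation1 g u v))).
Proof.
move=> [_ g_irr] _ guv _; apply: ext_le_rc.
exact: rc_colourable_operation1.
Qed.
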